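(* Let $d, t$ be integers with $d \geq t-1$ and $t \geq 4$. Then \[ \mathrm{rb}(W_d, F_t) \ge \left\lfloor \frac{2t-5}{t-2}\, d \right\rfloor + 1, \] i.e., there is an edge-coloring of $W_d$ with exactly $\left\lfloor \frac{2t-5}{t-2} d \right\rfloor$ colors containing no rainbow subgraph isomorphic to $F_t$.
   Context: A subgraph of an edge-colored graph is rainbow if no two of its edges have the same color. For graphs $G$ and $H$, the rainbow number $\mathrm{rb}(G,H)$ is the minimum integer $k$ such that every edge-coloring of $G$ that uses at least $k$ distinct colors contains a rainbow subgraph isomorphic to $H$. $W_d$ is the wheel: a hub vertex adjacent to all vertices of a cycle $v_1\cdots v_dv_1$. The fan $F_t$ is obtained from a cycle $v_1v_2\cdots v_tv_1$ by adding all chords $v_1v_i$, $3 \le i \le t-1$. *)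

From mathcomp Require Import all_boot.
From mathcomp Require Import boolp.
Set Implicit Arguments. Unset Strict Implicit. Unset Printing Implicit Defensive.

(* A simple graph is a finType of vertices with a symmetric irreflexive
   adjacency relation [adj]. *)

Definition edges (T : finType) (adj : rel T) : {set {set T}} :=
  [set [set x; y] | x in [set: T], y in [set: T] & adj x y].

(* An edge-coloring is any map from (vertex pairs) to colors (nat);
   only its values on edges matter.  Number of distinct colors used on E(G): *)
Definition ncolors (T : finType) (adj : rel T) (c : {set T} -> nat) : nat :=
  size (undup [seq c e | e <- enum (edges adj)]).

Definition has_rainbow_copy (T : finType) (adjG : rel T)
    (U : finType) (adjH : rel U) (c : {set T} -> nat) : Prop :=
  exists f : U -> T,
    [/\ injective f,
        (forall u v, adjH u v -> adjG (f u) (f v)) &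
        {in edges adjH &, injective (fun e : {set U} => c (f @: e))}].

Definition rb_prop (T : finType) (adjG : rel T) (U : finType) (adjH : rel U)
    (k : nat) : Prop :=
  forall c : {set T} -> nat, k <= ncolors adjG c -> has_rainbow_copy adjG adjH c.

Lemma rb_prop_exists (T : finType) (adjG : rel T) (U : finType) (adjH : rel U) :
  exists k, `[< rb_prop adjG adjH k >].
Proof.
exists (#|edges adjG|).+1; apply/asboolP => c hc; exfalso.
move: hc; rewrite /ncolors ltnNge; move/negP; apply.
by apply: leq_trans (size_undup _) _; rewrite size_map -cardE.
Qed.

Definition rb (T : finType) (adjG : rel T) (U : finType) (adjH : rel U) : nat :=
  ex_minn (rb_prop_exists adjG adjH).

(* Wheel W_d: vertex 0 is the hub, vertices 1..d form the cycle v_1 ... v_d v_1. *)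
Definition wheel_adj (d : nat) : rel 'I_d.+1 :=
  fun i j => (i != j) &&
    [|| (i == 0 :> nat), (j == 0 :> nat), (i.+1 == j :> nat), (j.+1 == i :> nat),
        (i == 1 :> nat) && (j == d :> nat) | (i == d :> nat) && (j == 1 :> nat)].

(* Fan F_t: vertex i stands for v_{i+1}; cycle v_1 ... v_t v_1 plus chords
   v_1 v_i (3 <= i <= t-1), i.e. v_1 is adjacent to all others and
   v_2 ... v_t is a path. *)
Definition fan_adj (t : nat) : rel 'I_t :=
  fun i j => (i != j) &&
    [|| (i == 0 :> nat), (j == 0 :> nat), (i.+1 == j :> nat) | (j.+1 == i :> nat)].

(* Colour the spoke to rim vertex v with colour v, and cut the rim 1..d into
   consecutive blocks of p = t - 2 vertices.  Rim edges inside a block get fresh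
   colours, the other rim edges repeat the colour of a spoke at one of their
   ends; this uses d + (d - ceil(d/p)) = floor((2t-5)d/(t-2)) colours.  In a
   rainbow copy of F_t, a rim edge of the copy therefore lies inside a block as
   soon as the colours of the spokes at its two ends occur elsewhere in the
   copy.  If the centre of the fan is the hub, its path of t - 1 rim vertices
   then lies in one block, which is too small.  Otherwise the centre is a rim
   vertex, of degree 3, so t = 4, the hub lies on the path of the fan, and in
   each of the three positions of the hub three rim vertices of the copy are
   forced into one block of size 2. *)

From mathcomp Require Import all_boot zify boolp.
Set Implicit Arguments. Unset Strict Implicit. Unset Printing Implicit Defensive.

Definition wheel_rel (d : nat) : rel nat := fun i j => (i != j) &&
  [|| i == 0, j == 0, i.+1 == j, j.+1 == i, (i == 1) && (j == d) | (i == d) && (j == 1)].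

Definition fan_rel : rel nat := fun i j =>
  (i != j) && [|| i == 0, j == 0, i.+1 == j | j.+1 == i].

Lemma wheel_adjE d (a b : 'I_d.+1) : wheel_adj a b = wheel_rel d a b.
Proof. by []. Qed.

Lemma fan_adjE t (i j : 'I_t) : fan_adj i j = fan_rel i j.
Proof. by []. Qed.

Definition rim_neighbours (d h : nat) : seq nat :=
  [:: if h == d then 1 else h.+1; if h == 1 then d else h.-1].

Lemma wheel_rel_rim d h v : 0 < h <= d -> v <= d -> wheel_rel d h v ->
  v \in 0 :: rim_neighbours d h.
Proof. by rewrite !inE; case: ifP; case: ifP; rewrite /wheel_rel; lia. Qed.

Definition block (p v : nat) : nat := (v - 1) %/ p.

Lemma block_iota p v : 0 < p -> 0 < v -> v \in iota (block p v * p).+1 p.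
Proof.
move=> p0 v0; rewrite mem_iota /block.
have := divn_eq (v - 1) p; have := ltn_pmod (v - 1) p0; lia.
Qed.

Lemma size_block p B (L : seq nat) : 0 < p -> uniq L ->
  (forall v, v \in L -> 0 < v /\ block p v = B) -> size L <= p.
Proof.
move=> p0 uL HL; rewrite -(size_iota (B * p).+1 p).
by apply: uniq_leq_size uL _ => v /HL [v0 <-]; apply: block_iota.
Qed.

(* A rim edge {m, m+1} inside a block gets the fresh colour d + m + 1; a rim
   edge between two blocks and the closing edge {1, d} repeat the colour of the
   spoke at one of their ends. *)
Definition edge_colour (d p a b : nat) : nat :=
  let m := minn a b in let M := maxn a b in
  if m == 0 then M else if M == m.+1 then (if p %| m then M else d + M) else m.

(* On a two-element set, the sum minus the maximum is the minimum. *)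
Definition wheel_colouring d p (e : {set 'I_d.+1}) : nat :=
  let M := \max_(i in e) i in edge_colour d p (\sum_(i in e) i - M) M.
Arguments wheel_colouring : clear implicits.

Lemma edge_colourC d p a b : edge_colour d p a b = edge_colour d p b a.
Proof. by rewrite /edge_colour minnC maxnC. Qed.

Lemma edge_colour_hub d p v : edge_colour d p 0 v = v.
Proof. by rewrite /edge_colour min0n max0n eqxx. Qed.

Lemma edge_colour_succ d p a : 0 < a ->
  edge_colour d p a a.+1 = if p %| a then a.+1 else d + a.+1.
Proof.
move=> a0; rewrite /edge_colour (minn_idPl (leqnSn a)) (maxn_idPr (leqnSn a)).
by rewrite eqxx; case: eqP => //; lia.
Qed.

Lemma block_succ p a : 0 < p -> 0 < a -> ~~ (p %| a) -> block p a.+1 = block p a.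
Proof.
move=> p0 a0 ndvd.
by rewrite /block !subn1 /= -{1}(prednK a0) divnS // prednK // (negbTE ndvd).
Qed.

Lemma edge_colour_rim d p a b : 0 < p -> 0 < a -> 0 < b -> wheel_rel d a b ->
  [\/ block p a = block p b, edge_colour d p a b = a | edge_colour d p a b = b].
Proof.
move=> p0; wlog lt_ab : a b / a < b => [hw a0 b0 ab|a0 b0 ab].
  have [/hw|/hw|eq_ab] := ltngtP a b; first exact.
    have ba : wheel_rel d b a by move: ab; rewrite /wheel_rel; lia.
    rewrite edge_colourC; case/(_ b0 a0 ba) => ?;
    by [constructor 1|constructor 3|constructor 2].
  by move: ab; rewrite eq_ab /wheel_rel eqxx.
have [->|ne] := eqVneq b a.+1.
  rewrite edge_colour_succ //; case: ifP => [_|/negbT ndvd]; first by constructor 3.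
  by constructor 1; rewrite block_succ.
have [ea eb] : a = 1 /\ b = d by move: ab; rewrite /wheel_rel; lia.
move: ne lt_ab; rewrite ea eb => /negPf d2 /ltnW d1; constructor 2.
by rewrite /edge_colour /= (minn_idPl d1) (maxn_idPr d1) d2.
Qed.

Lemma wheel_colouring2 d p (a b : 'I_d.+1) : a != b ->
  wheel_colouring d p [set a; b] = edge_colour d p a b.
Proof.
move=> ab; rewrite /wheel_colouring big_setU1 ?inE // big_set1 big_setU1 ?inE //.
rewrite big_set1 /edge_colour /=.
have -> : minn (a + b - maxn a b) (maxn a b) = minn a b by lia.
by have -> : maxn (a + b - maxn a b) (maxn a b) = maxn a b by lia.
Qed.

Lemma wheel_colouring_inord d p a b : a <= d -> b <= d -> a != b ->
  wheel_colouring d p [set inord a; inord b] = edge_colour d p a b.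
Proof.
by move=> ad bd ab; rewrite wheel_colouring2 ?inordK // -val_eqE /= !inordK.
Qed.

Lemma in_edges (T : finType) (adj : rel T) a b : adj a b -> [set a; b] \in edges adj.
Proof. by move=> ab; apply/imset2P; exists a b; rewrite ?inE. Qed.

Lemma size_leq_ncolors (T : finType) (adj : rel T) (c : {set T} -> nat) (L : seq nat) :
  uniq L -> (forall x, x \in L -> exists a b, adj a b /\ c [set a; b] = x) ->
  size L <= ncolors adj c.
Proof.
move=> uL HL; apply: uniq_leq_size uL _ => _ /HL [a [b [ab <-]]].
by rewrite mem_undup map_f // mem_enum in_edges.
Qed.

Lemma count_dvdn_iota p n : 0 < p -> count (dvdn p) (iota 1 n) = n %/ p.
Proof.
move=> p0; elim: n => [|n IH]; first by rewrite div0n.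
by rewrite -[n.+1]addn1 iotaD count_cat IH /= addn0 add1n addn1 divnS // addnC.
Qed.

Lemma ncolors_wheel_colouring d p : 0 < p ->
  d + (d.-1 - d.-1 %/ p) <= ncolors (@wheel_adj d) (wheel_colouring d p).
Proof.
move=> p0; set fresh := [seq d + a.+1 | a <- iota 1 d.-1 & ~~ (p %| a)].
have -> : d + (d.-1 - d.-1 %/ p) = size (iota 1 d ++ fresh).
  rewrite size_cat size_iota size_map size_filter -(count_dvdn_iota _ p0).
  by rewrite -{1}(size_iota 1 d.-1) -(count_predC (dvdn p)) addKn.
apply: size_leq_ncolors => [|x].
  rewrite cat_uniq iota_uniq map_inj_uniq ?filter_uniq ?iota_uniq //=; last by move=> ? ?; lia.
  by rewrite andbT; apply/hasPn => _ /mapP [a _ ->]; rewrite mem_iota; lia.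
rewrite mem_cat mem_iota => /orP [hx|/mapP [a]].
  exists (inord 0), (inord x); rewrite wheel_colouring_inord ?edge_colour_hub; try lia.
  by split => //; rewrite wheel_adjE /wheel_rel !inordK //; lia.
rewrite mem_filter mem_iota => /andP [ndvd ha] ->.
exists (inord a), (inord a.+1); rewrite wheel_colouring_inord ?edge_colour_succ; try lia.
by rewrite (negPf ndvd); split => //; rewrite wheel_adjE /wheel_rel !inordK //; lia.
Qed.

Lemma bound_leq_colour_count d p : 0 < p ->
  ((2 * p - 1) * d) %/ p <= d + (d.-1 - d.-1 %/ p).
Proof.
move=> p0; rewrite -ltnS ltn_divLR //.
have := divn_eq d.-1 p; have := ltn_pmod d.-1 p0; have := leq_div d.-1 p.
set q := d.-1 %/ p; set r := d.-1 %% p; nia.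
Qed.

Lemma set2_inj (T : finType) (x y z w : T) : x != y -> [set x; y] = [set z; w] ->
  (x = z /\ y = w) \/ (x = w /\ y = z).
Proof.
move=> xy E; have /set2P hx : x \in [set z; w] by rewrite -E set21.
have /set2P hy : y \in [set z; w] by rewrite -E set22.
by move: xy; case: hx hy => -> [] ->; rewrite ?eqxx //; auto.
Qed.

Lemma rainbow_fan_nat d p T :
  has_rainbow_copy (@wheel_adj d) (@fan_adj T.+1) (wheel_colouring d p) ->
  exists g : nat -> nat, [/\ forall i, g i <= d,
    forall i j, i <= T -> j <= T -> g i = g j -> i = j,
    forall i j, i <= T -> j <= T -> fan_rel i j -> wheel_rel d (g i) (g j) &
    forall i j k l, i <= T -> j <= T -> k <= T -> l <= T -> fan_rel i j -> fan_rel k l ->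
      edge_colour d p (g i) (g j) = edge_colour d p (g k) (g l) ->
      (i = k /\ j = l) \/ (i = l /\ j = k)].
Proof.
move=> [f [f_inj f_hom f_rb]]; exists (fun i => val (f (inord i))).
have inord_inj i j : i <= T -> j <= T -> inord i = inord j :> 'I_T.+1 -> i = j.
  by move=> hi hj /(congr1 (@nat_of_ord _)); rewrite !inordK.
have adj i j : i <= T -> j <= T -> fan_rel i j -> fan_adj (inord i : 'I_T.+1) (inord j).
  by move=> hi hj; rewrite fan_adjE !inordK.
split=> [i|i j hi hj /val_inj/f_inj/(inord_inj _ _ hi hj) //|
         i j hi hj /(adj _ _ hi hj)/f_hom //|].
  by rewrite -ltnS ltn_ord.
move=> i j k l hi hj hk hl /(adj _ _ hi hj) ij /(adj _ _ hk hl) kl.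
have ne u v : fan_adj u v -> f u != f v by move/f_hom/andP => [].
have imf u v : f @: [set u; v] = [set f u; f v] by rewrite imsetU1 imset_set1.
rewrite -!wheel_colouring2 ?ne // -!imf => /(f_rb _ _ (in_edges ij) (in_edges kl)).
case/set2_inj => [|[eik ejl]|[eil ejk]].
- by move: ij => /andP [].
- by left; split; apply: inord_inj.
- by right; split; apply: inord_inj.
Qed.

Section NoRainbowFan.

Variables (d T : nat) (g : nat -> nat).
Hypothesis T_ge3 : 3 <= T.
Hypothesis g_le : forall i, g i <= d.
Hypothesis g_inj : forall i j, i <= T -> j <= T -> g i = g j -> i = j.
Hypothesis g_hom : forall i j, i <= T -> j <= T -> fan_rel i j -> wheel_rel d (g i) (g j).

Local Notation p := T.-1.
Local Notation colour i j := (edge_colour d p (g i) (g j)).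

Hypothesis g_rainbow : forall i j k l, i <= T -> j <= T -> k <= T -> l <= T ->
  fan_rel i j -> fan_rel k l -> colour i j = colour k l ->
  (i = k /\ j = l) \/ (i = l /\ j = k).

Lemma colour_hubl i j : g i = 0 -> colour i j = g j.
Proof. by move=> ->; rewrite edge_colour_hub. Qed.

Lemma colour_hubr i j : g j = 0 -> colour i j = g i.
Proof. by move=> ->; rewrite edge_colourC edge_colour_hub. Qed.

Lemma rim_split i j : i <= T -> j <= T -> fan_rel i j -> 0 < g i -> 0 < g j ->
  block p (g i) = block p (g j) \/ colour i j = g i \/ colour i j = g j.
Proof.
move=> hi hj ij gi gj.
have p0 : 0 < p by lia.
by case: (edge_colour_rim p0 gi gj (g_hom hi hj ij)); auto.
Qed.

Lemma pos_off_hub k i : k <= T -> i <= T -> g k = 0 -> i != k -> 0 < g i.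
Proof. by move=> hk hi gk ik; rewrite lt0n; apply/eqP => gi; have := g_inj hi hk; lia. Qed.

Lemma size_block_fan B (L : seq nat) : uniq L ->
  {in L, forall i, [/\ i <= T, 0 < g i & block p (g i) = B]} -> size L <= p.
Proof.
move=> uL HL; rewrite -(size_map g); apply: (size_block (B := B)); first lia.
  by rewrite map_inj_in_uniq // => i j /HL [hi _ _] /HL [hj _ _]; apply: g_inj.
by move=> _ /mapP [i /HL [_ gi bi] ->].
Qed.

Lemma centre_not_hub : g 0 != 0.
Proof.
apply/eqP => g0.
have step i : 1 <= i < T -> block p (g i.+1) = block p (g i).
  move=> hi; have := colour_hubl i g0; have := colour_hubl i.+1 g0.
  have := @g_rainbow 0 i i i.+1; have := @g_rainbow 0 i.+1 i i.+1.
  have := @rim_split i i.+1; have := @pos_off_hub 0 i; have := @pos_off_hub 0 i.+1.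
  rewrite /fan_rel; lia.
have same i : 1 <= i <= T -> block p (g i) = block p (g 1).
  by elim: i => [|[|i] IH] hi //; rewrite step ?IH; lia.
suff: T <= p by lia.
rewrite -[X in X <= _](size_iota 1 T); apply: (size_block_fan (B := block p (g 1))).
  exact: iota_uniq.
move=> i; rewrite mem_iota => hi.
by split; [lia|apply: (pos_off_hub (k := 0))|apply: same]; lia.
Qed.

Lemma rim_centre_hub_on_path : 0 < g 0 -> T = 3 /\ exists2 i, 0 < i <= 3 & g i = 0.
Proof.
move=> h0; set L := [seq g i | i <- iota 1 T].
have uL : uniq L.
  by rewrite map_inj_in_uniq ?iota_uniq // => i j; rewrite !mem_iota => hi hj /g_inj; lia.
have nbr : {subset L <= 0 :: rim_neighbours d (g 0)}.
  move=> x /mapP [i]; rewrite mem_iota => hi ->.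
  by apply: wheel_rel_rim; rewrite ?h0 ?g_le //; apply: g_hom; rewrite /fan_rel; lia.
have T3 : T = 3 by have := uniq_leq_size uL nbr; rewrite size_map size_iota /=; lia.
split=> //; have /mapP [i] : 0 \in L.
  apply: contraT => nL; suff /(uniq_leq_size uL) : {subset L <= rim_neighbours d (g 0)}.
    by rewrite size_map size_iota T3.
  by move=> v vL; move: (nbr v vL); rewrite inE; case: eqP => [v0|//]; rewrite -v0 vL in nL.
by rewrite mem_iota T3 => hi g0; exists i.
Qed.

Lemma rim_triple_blocks i j k : T = 3 -> uniq [:: i; j; k] ->
  i <= 3 -> j <= 3 -> k <= 3 -> 0 < g i -> 0 < g j -> 0 < g k ->
  block p (g j) = block p (g i) -> block p (g k) = block p (g i) -> False.
Proof.
move=> T3 u hi hj hk gi gj gk bj bk.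
suff: size [:: i; j; k] <= p by rewrite T3.
apply: (size_block_fan (B := block p (g i))) => // v.
by rewrite !inE => /or3P [] /eqP ->; split => //; rewrite T3.
Qed.

Lemma hub_not_path_mid : T = 3 -> 0 < g 0 -> g 2 != 0.
Proof.
move=> T3 h0; apply/eqP => g2.
have same j : (j = 1) \/ (j = 3) -> block p (g j) = block p (g 0).
  case=> ->; have := colour_hubr 0 g2.
  - have := colour_hubr 1 g2; have := @g_rainbow 0 1 0 2; have := @g_rainbow 0 1 1 2.
    have := @rim_split 0 1; have := @pos_off_hub 2 1; rewrite /fan_rel /=; lia.
  - have := colour_hubr 3 g2; have := @g_rainbow 0 3 0 2; have := @g_rainbow 0 3 3 2.
    have := @rim_split 0 3; have := @pos_off_hub 2 3; rewrite /fan_rel /=; lia.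
have := @rim_triple_blocks 0 1 3 T3 isT; have := @pos_off_hub 2 1; have := @pos_off_hub 2 3.
have := same 1; have := same 3; lia.
Qed.

(* The copy contains the spokes at g 0 and g 2, so the rim edge {g 0, g 2} lies
   in a block; so does {g 2, g 3}, unless it repeats the colour of the spoke
   at g 3, in which case {g 0, g 3} lies in a block. *)
Lemma hub_not_path_first : T = 3 -> 0 < g 0 -> g 1 != 0.
Proof.
move=> T3 h0; apply/eqP => g1.
have := colour_hubr 0 g1; have := colour_hubl 2 g1 => c12 c01.
have [g2 g3] : 0 < g 2 /\ 0 < g 3 by split; apply: (pos_off_hub (k := 1)); rewrite ?T3.
have b02 : block p (g 2) = block p (g 0).
  have := @g_rainbow 0 2 0 1; have := @g_rainbow 0 2 1 2; have := @rim_split 0 2.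
  rewrite /fan_rel /=; lia.
have b03 : block p (g 3) = block p (g 0).
  have leT v : v <= 3 -> v <= T by rewrite T3.
  case: (rim_split (leT 2 isT) (leT 3 isT) isT g2 g3) => [|[|c23]]; first lia.
    by have := @g_rainbow 2 3 1 2; rewrite /fan_rel /=; lia.
  have := @g_rainbow 0 3 0 1; have := @g_rainbow 0 3 2 3; have := @rim_split 0 3.
  rewrite /fan_rel /=; lia.
by apply: (@rim_triple_blocks 0 2 3 T3 isT) => //; lia.
Qed.

Lemma hub_not_path_last : T = 3 -> 0 < g 0 -> g 3 != 0.
Proof.
move=> T3 h0; apply/eqP => g3.
have := colour_hubr 0 g3; have := colour_hubl 2 g3 => c32 c03.
have [g2 g1] : 0 < g 2 /\ 0 < g 1 by split; apply: (pos_off_hub (k := 3)); rewrite ?T3.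
have b02 : block p (g 2) = block p (g 0).
  have := @g_rainbow 0 2 0 3; have := @g_rainbow 0 2 3 2; have := @rim_split 0 2.
  rewrite /fan_rel /=; lia.
have b01 : block p (g 1) = block p (g 0).
  have leT v : v <= 3 -> v <= T by rewrite T3.
  case: (rim_split (leT 2 isT) (leT 1 isT) isT g2 g1) => [|[|c21]]; first lia.
    by have := @g_rainbow 2 1 3 2; rewrite /fan_rel /=; lia.
  have := @g_rainbow 0 1 0 3; have := @g_rainbow 0 1 2 1; have := @rim_split 0 1.
  rewrite /fan_rel /=; lia.
by apply: (@rim_triple_blocks 0 2 1 T3 isT) => //; lia.
Qed.

Lemma no_rainbow_fan_nat : False.
Proof.
have h0 : 0 < g 0 by rewrite lt0n centre_not_hub.
have [T3 [i hi gi]] := rim_centre_hub_on_path h0.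
have := hub_not_path_first T3 h0; have := hub_not_path_mid T3 h0.
have := hub_not_path_last T3 h0.
by case: i hi gi => [|[|[|[|i]]]] // _ ->.
Qed.

End NoRainbowFan.

Lemma no_rainbow_fan d T : 3 <= T ->
  ~ has_rainbow_copy (@wheel_adj d) (@fan_adj T.+1) (wheel_colouring d T.-1).
Proof. by move=> T3 /rainbow_fan_nat [g [*]]; apply: (@no_rainbow_fan_nat d T g). Qed.

Lemma ltn_rb (T : finType) (adjG : rel T) (U : finType) (adjH : rel U) k c :
  k <= ncolors adjG c -> ~ has_rainbow_copy adjG adjH c -> k < rb adjG adjH.
Proof.
move=> kc no_rb; rewrite /rb; case: ex_minnP => m /asboolP rb_m _.
by rewrite ltnNge; apply/negP => /leq_trans/(_ kc)/rb_m.
Qed.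

Theorem theorem4p1 (d t : nat) (hdt : t.-1 <= d) (ht : 4 <= t) :
  ((2 * t - 5) * d) %/ (t - 2) + 1 <= rb (@wheel_adj d) (@fan_adj t).
Proof.
(* The colouring works for every d: [hdt] only rules out wheels too small to
   contain F_t at all. *)
case: t hdt ht => // T _ ht; rewrite addn1.
apply: (ltn_rb (c := wheel_colouring d T.-1)); last by apply: no_rainbow_fan; lia.
have -> : 2 * T.+1 - 5 = 2 * T.-1 - 1 by lia.
rewrite subn2 /=; apply: leq_trans (bound_leq_colour_count _ _) _; first lia.
by apply: ncolors_wheel_colouring; lia.
Qed.
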